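(* Let $G=(V,E,C,\ell)$ be an edge-labeled hypergraph with $C=\{1,\dots,k\}$, and consider the linear program \[ \min \sum_{e\in E} x_e \quad\text{s.t.}\quad \sum_{c=1}^k x_v^c=k-1\ \ \forall v\in V;\qquad x_v^c\le x_e\ \ \forall c\in C,\ \forall e\in E \text{ with } \ell(e)=c,\ \forall v\in e;\qquad 0\le x_v^c\le 1,\ 0\le x_e\le 1. \] Let $(x_v^c,x_e)$ be an optimal solution of this LP. For each $c\in C$ let $S_c=\{v\in V: x_v^c<1/2\}$, set $Y[i]=c$ for every $i\in S_c$, and assign every node lying in no $S_c$ to an arbitrary category. Then $Y$ is a well-defined clustering and $\mathrm{CatEdgeClus}(Y)\le 2\min_{Y':V\to C}\mathrm{CatEdgeClus}(Y')$.
   Context: An edge-labeled hypergraph $G=(V,E,C,\ell)$ consists of a finite node set $V$, a finite collection $E$ of hyperedges (nonempty subsets of $V$), a finite set $C$ of categories, and a labeling $\ell:E\to C$. A clustering is a map $Y:V\to C$. For $e\in E$, $m_Y(e)=1$ if $Y[i]\neq\ell(e)$ for some $i\in e$, and $m_Y(e)=0$ otherwise; $\mathrm{CatEdgeClus}(Y)=\sum_{e\in E}m_Y(e)$. *)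

From mathcomp Require Import all_boot all_order all_algebra.
Set Implicit Arguments. Unset Strict Implicit. Unset Printing Implicit Defensive.
Import Order.TTheory GRing.Theory Num.Theory.

(* An edge-labeled hypergraph with node set V, hyperedge index set E
   (a finite collection, multiplicities allowed), categories C = 'I_k
   (the paper's {1,...,k}), hyperedge map [edge] and labeling [lab]. *)

Definition mY (V E : finType) (k : nat) (edge : E -> {set V}) (lab : E -> 'I_k)
  (Y : V -> 'I_k) (e : E) : nat :=
  [exists i in edge e, Y i != lab e] : nat.

Definition CatEdgeClus (V E : finType) (k : nat) (edge : E -> {set V})
  (lab : E -> 'I_k) (Y : V -> 'I_k) : nat :=
  \sum_(e : E) mY edge lab Y e.

Local Open Scope ring_scope.

Definition lp_feasible (R : realFieldType) (V E : finType) (k : nat)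
  (edge : E -> {set V}) (lab : E -> 'I_k)
  (xv : V -> 'I_k -> R) (xe : E -> R) : Prop :=
  [/\ (forall v, \sum_(c < k) xv v c = (k%:R - 1)),
      (forall (c : 'I_k) (e : E) (v : V), lab e = c -> v \in edge e -> xv v c <= xe e),
      (forall v c, 0 <= xv v c <= 1) &
      (forall e, 0 <= xe e <= 1)].

Definition lp_objective (R : realFieldType) (E : finType) (xe : E -> R) : R :=
  \sum_(e : E) xe e.

Definition lp_optimal (R : realFieldType) (V E : finType) (k : nat)
  (edge : E -> {set V}) (lab : E -> 'I_k)
  (xv : V -> 'I_k -> R) (xe : E -> R) : Prop :=
  lp_feasible edge lab xv xe /\
  forall (yv : V -> 'I_k -> R) (ye : E -> R),
    lp_feasible edge lab yv ye -> lp_objective xe <= lp_objective ye.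

(* Each node spreads a total "non-membership" of k - 1 over k categories, each at most 1,
   so at most one category can receive less than 1/2: the rounding is well defined.
   If the rounding cuts a hyperedge e, some node v of e has x_v^{l(e)} >= 1/2, hence
   x_e >= 1/2; the rounded cost is thus at most twice the LP optimum.  Conversely every
   clustering yields an integral feasible point whose objective is its cost, so the LP
   optimum is a lower bound for the optimal clustering cost. *)
From mathcomp Require Import all_boot all_order all_algebra.
From mathcomp Require Import lra.
Set Implicit Arguments. Unset Strict Implicit. Unset Printing Implicit Defensive.
Import Order.TTheory GRing.Theory Num.Theory.
Local Open Scope ring_scope.

Section CatEdgeClusLP.

Variables (R : realFieldType) (V E : finType) (k : nat).
Variables (edge : E -> {set V}) (lab : E -> 'I_k).

Lemma mY_eq1 (Y : V -> 'I_k) (e : E) (v : V) :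
  v \in edge e -> Y v != lab e -> mY edge lab Y e = 1%N.
Proof. by move=> ve Yv; rewrite /mY; case: existsP => // -[]; exists v; rewrite ve. Qed.

Lemma lp_feasible_addr_ge1 (xv : V -> 'I_k -> R) (xe : E -> R) (v : V) (c1 c2 : 'I_k) :
  lp_feasible edge lab xv xe -> c1 != c2 -> 1 <= xv v c1 + xv v c2.
Proof.
case=> sum_xv _ xv01 _ c12.
have sum_compl : \sum_(c < k) (1 - xv v c) = 1.
  by rewrite sumrB sumr_const card_ord sum_xv; lra.
have rest_ge0 : 0 <= \sum_(c < k | (c != c1) && (c != c2)) (1 - xv v c).
  by apply: sumr_ge0 => c _; have /andP[] := xv01 v c; lra.
move: sum_compl; rewrite (bigD1 c1) // (bigD1 c2) /=; last by rewrite eq_sym.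
lra.
Qed.

Lemma lp_feasible_half_uniq (xv : V -> 'I_k -> R) (xe : E -> R) (v : V) (c1 c2 : 'I_k) :
  lp_feasible edge lab xv xe -> xv v c1 < 1/2 -> xv v c2 < 1/2 -> c1 = c2.
Proof.
move=> feas lt1 lt2; apply/eqP; apply: contraT => c12.
by have := lp_feasible_addr_ge1 v feas c12; lra.
Qed.

Lemma mY_rounding_le (xv : V -> 'I_k -> R) (xe : E -> R) (Y : V -> 'I_k) (e : E) :
  lp_feasible edge lab xv xe ->
  (forall v c, xv v c < 1/2 -> Y v = c) ->
  (mY edge lab Y e)%:R <= 2 * xe e.
Proof.
case=> _ xv_le_xe _ xe01 Y_round; rewrite /mY.
case: existsP => [[v /andP[ve Yv]]|_] /=; last by have /andP[] := xe01 e; lra.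
have half_le : 1/2 <= xv v (lab e).
  by rewrite leNgt; apply: contra Yv => /Y_round ->.
by have := xv_le_xe _ e v erefl ve; lra.
Qed.

Lemma CatEdgeClus_rounding_le (xv : V -> 'I_k -> R) (xe : E -> R) (Y : V -> 'I_k) :
  lp_feasible edge lab xv xe ->
  (forall v c, xv v c < 1/2 -> Y v = c) ->
  (CatEdgeClus edge lab Y)%:R <= 2 * lp_objective xe.
Proof.
move=> feas Y_round; rewrite natr_sum /lp_objective mulr_sumr.
by apply: ler_sum => e _; apply: mY_rounding_le feas Y_round.
Qed.

Definition clustering_xv (Y : V -> 'I_k) (v : V) (c : 'I_k) : R := 1 - (Y v == c)%:R.

Definition clustering_xe (Y : V -> 'I_k) (e : E) : R := (mY edge lab Y e)%:R.

Lemma clustering_lp_feasible (Y : V -> 'I_k) :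
  lp_feasible edge lab (clustering_xv Y) (clustering_xe Y).
Proof.
rewrite /clustering_xv /clustering_xe; split.
- move=> v; rewrite sumrB sumr_const card_ord (bigD1 (Y v)) //= eqxx big1 ?addr0 //.
  by move=> c /negbTE; rewrite eq_sym => ->.
- move=> c e v <- ve; have [_|Yv] := eqVneq (Y v) (lab e); first by rewrite subrr.
  by rewrite (mY_eq1 ve Yv) subr0.
- by move=> v c; case: (_ == _) => /=; lra.
- by move=> e; rewrite /mY; case: [exists _ in _, _] => /=; lra.
Qed.

Lemma lp_objective_clustering (Y : V -> 'I_k) :
  lp_objective (clustering_xe Y) = (CatEdgeClus edge lab Y)%:R.
Proof. by rewrite natr_sum. Qed.

Lemma lp_optimal_le_CatEdgeClus (xv : V -> 'I_k -> R) (xe : E -> R) (Y : V -> 'I_k) :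
  lp_optimal edge lab xv xe -> lp_objective xe <= (CatEdgeClus edge lab Y)%:R.
Proof.
case=> _ xe_min; rewrite -lp_objective_clustering.
exact/xe_min/clustering_lp_feasible.
Qed.

End CatEdgeClusLP.

Theorem mainTheorem5 (R : realFieldType) (V E : finType) (k : nat)
  (edge : E -> {set V}) (lab : E -> 'I_k)
  (Hne : forall e, edge e != set0)
  (xv : V -> 'I_k -> R) (xe : E -> R)
  (Hopt : lp_optimal edge lab xv xe) :
  (* the sets S_c = {v | xv v c < 1/2} are pairwise disjoint, so Y is well defined *)
  (forall (v : V) (c1 c2 : 'I_k), xv v c1 < 1/2 -> xv v c2 < 1/2 -> c1 = c2) /\
  (* any Y that puts S_c into c (other nodes arbitrary) is a 2-approximation *)
  (forall Y : V -> 'I_k,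
     (forall (v : V) (c : 'I_k), xv v c < 1/2 -> Y v = c) ->
     forall Y' : V -> 'I_k,
       (CatEdgeClus edge lab Y <= 2 * CatEdgeClus edge lab Y')%N).
Proof.
have [feas _] := Hopt.
split=> [v c1 c2|Y Y_round Y']; first exact: lp_feasible_half_uniq feas.
rewrite -(ler_nat R) natrM.
apply: le_trans (CatEdgeClus_rounding_le feas Y_round) _.
by rewrite ler_pM2l // (lp_optimal_le_CatEdgeClus _ Hopt).
Qed.
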